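(* Let $S$ be an epsilon-strongly $G$-graded ring such that $S_g\neq0$ for only finitely many $g\in G$. Define recursively $1_{(0)}=1_S$ and, as long as $1_{(j)}\neq0$: $S^{(j)}=1_{(j)}S$, which is an epsilon-strongly $G$-graded ring with components $1_{(j)}S_g$, identity $1_{(j)}$ and $\epsilon^{(j)}_g=1_{(j)}\epsilon_g$; let $e^{(j)}_1,\dots,e^{(j)}_{k_j}$ be the minimal elements of $B(\mathcal{E}^{(j)}_G)^*$, where $B(\mathcal{E}^{(j)}_G)$ is the multiplicative semigroup generated by $\{\epsilon^{(j)}_g:g\in G\}$; and set $1_{(j+1)}=1_{(j)}-\sum_{i=1}^{k_j}e^{(j)}_i$. Assume that at every step $j$ with $1_{(j)}\neq0$ all the minimal elements $e^{(j)}_i$ are epsilon-central in $S^{(j)}$, i.e. $N^{(j)}(e^{(j)}_i)=\{g\in G:e^{(j)}_i\epsilon^{(j)}_g=e^{(j)}_i\}$ is a subgroup of $G$. Then the process stops after finitely many steps and $S$ is a finite direct sum of rings, each of which is either of the form $e^{(j)}_iS$ and strongly $N^{(j)}(e^{(j)}_i)$-graded (by the components $e^{(j)}_iS_g$, $g\in N^{(j)}(e^{(j)}_i)$), or is a ring $1_{(l)}S$ whose induced gradation is trivial (i.e. $1_{(l)}S_g=0$ for all $g\neq e$).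
   Context: $G$ is a group with identity $e$; $S=\bigoplus_{g\in G}S_g$ is an associative unital ring graded by $G$, $R=S_e$, $XY$ denotes finite sums of products. $S$ is epsilon-strongly graded: each ideal $S_gS_{g^{-1}}$ of $R$ has an identity $\epsilon_g$ with $\epsilon_gs=s=s\epsilon_{g^{-1}}$ for $s\in S_g$; $\epsilon_e=1_S$; each $\epsilon_g$ is an idempotent in $Z(R)$. For a semigroup $B$ of idempotents containing $0$, $B^*=B\setminus\{0\}$ is ordered by $a\le b$ iff $a=ab$. A ring graded by a subgroup $H$ is strongly $H$-graded if $A_gA_h=A_{gh}$ for all $g,h\in H$. *)

From HB Require Import structures.
From mathcomp Require Import all_boot all_order all_algebra.
Set Implicit Arguments.
Unset Strict Implicit.
Unset Printing Implicit Defensive.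
Import GRing.Theory.
Local Open Scope ring_scope.

(* A grading is a family A : G -> S -> Prop of subsets (A g = S_g). *)

Definition prodset (S : pzRingType) (X Y : S -> Prop) (t : S) : Prop :=
  exists n (a b : 'I_n -> S),
    (forall i, X (a i) /\ Y (b i)) /\ t = \sum_(i < n) a i * b i.

Definition is_grading (G : groupType) (S : pzRingType) (A : G -> S -> Prop) :=
  [/\ forall g, A g 0 /\ (forall x y, A g x -> A g y -> A g (x - y)),
      forall g h x y, A g x -> A h y -> A (g * h)%g (x * y),
      forall s : S, exists n (gs : 'I_n -> G) (xs : 'I_n -> S),
        [/\ injective gs, forall i, A (gs i) (xs i) & s = \sum_(i < n) xs i] &
      forall n (gs : 'I_n -> G) (xs : 'I_n -> S), injective gs ->
        (forall i, A (gs i) (xs i)) -> \sum_(i < n) xs i = 0 ->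
        forall i, xs i = 0].

Definition eps_strong (G : groupType) (S : pzRingType) (A : G -> S -> Prop)
  (eps : G -> S) :=
  forall g : G,
  [/\ prodset (A g) (A (g^-1)%g) (eps g),
      forall t, prodset (A g) (A (g^-1)%g) t -> eps g * t = t /\ t * eps g = t &
      forall s, A g s -> eps g * s = s /\ s * eps (g^-1)%g = s].

Definition finite_support (G : groupType) (S : pzRingType) (A : G -> S -> Prop) :=
  exists l : seq G, forall g s, A g s -> s != 0 -> g \in l.

Definition Bset (G : groupType) (S : pzRingType) (eps : G -> S) (u x : S) :=
  exists n (gs : 'I_n.+1 -> G), x = \prod_(i < n.+1) (u * eps (gs i)).

(* minimal elements of B(E^(u))^*, for the order a <= b iff a = ab *)
Definition minB (G : groupType) (S : pzRingType) (eps : G -> S) (u e : S) :=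
  [/\ Bset eps u e, e != 0 &
      forall b, Bset eps u b -> b != 0 -> b = b * e -> b = e].

Definition step (G : groupType) (S : pzRingType) (eps : G -> S) (u u' : S) :=
  exists es : seq S,
    [/\ uniq es, forall e, e \in es <-> minB eps u e &
        u' = u - \sum_(e <- es) e].

Inductive reach (G : groupType) (S : pzRingType) (eps : G -> S) : S -> Prop :=
| reach_one : reach eps 1
| reach_step u u' : reach eps u -> u != 0 -> step eps u u' -> reach eps u'.

Definition Nset (G : groupType) (S : pzRingType) (eps : G -> S) (u e : S)
  (g : G) : Prop := e * (u * eps g) = e.

Definition is_subgroup (G : groupType) (H : G -> Prop) :=
  [/\ H 1%g, forall g h, H g -> H h -> H (g * h)%g & forall g, H g -> H (g^-1)%g].

Definition compA (G : groupType) (S : pzRingType) (A : G -> S -> Prop)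
  (f : S) (g : G) (t : S) : Prop := exists s, A g s /\ t = f * s.

Definition strongly_graded_by (G : groupType) (S : pzRingType)
  (A : G -> S -> Prop) (f : S) (H : G -> Prop) :=
  (forall g s, ~ H g -> A g s -> f * s = 0) /\
  (forall g h, H g -> H h -> forall t,
      compA A f (g * h)%g t <-> prodset (compA A f g) (compA A f h) t).

Definition strong_piece (G : groupType) (S : pzRingType) (A : G -> S -> Prop)
  (eps : G -> S) (f : S) :=
  exists u, [/\ reach eps u, u != 0, minB eps u f &
                strongly_graded_by A f (Nset eps u f)].

Definition trivial_piece (G : groupType) (S : pzRingType) (A : G -> S -> Prop)
  (eps : G -> S) (f : S) :=
  reach eps f /\ (forall g s, g != 1%g -> A g s -> f * s = 0).

From Pilot Require Import Defs.
From HB Require Import structures.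
From mathcomp Require Import all_boot all_order all_algebra.
From Stdlib Require Import Classical_Prop.
Set Implicit Arguments.
Unset Strict Implicit.
Unset Printing Implicit Defensive.
Import GRing.Theory.
Local Open Scope ring_scope.

(* The eps g are commuting idempotents of S_e, so an element of B(E^(u))
   is u * eps(r), a product over a list r of degrees depending only on the
   set of degrees.  A minimal element e of B(E^(u))^* is an idempotent
   below u that each eps_g fixes or kills; distinct ones are orthogonal,
   and when N(e) is a subgroup, e is central and e S is strongly
   N(e)-graded.  Removing the minimal elements from u leaves a central
   idempotent below u.  With finite support B(E^(u)) is covered by the
   u * eps(X), X a set of positions in the support: a minimal element
   exists while u != 0 (X of maximal size with u eps(X) != 0), and the
   number of such X drops at each step.  So the process reaches 0 and the
   minimal elements met along the way decompose 1; a trivially graded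
   remainder would itself be such a minimal element, so every piece is a
   strongly graded one. *)

(* Over a classical meta-theory, any property cuts a duplicate-free
   sublist out of a finite list; this yields the list of all minimal
   elements, once we know they lie among finitely many candidates. *)
Lemma uniq_sublist (T : eqType) (P : T -> Prop) (c : seq T) :
  exists es : seq T, uniq es /\ forall x, x \in es <-> x \in c /\ P x.
Proof.
elim: c => [|y c [es [es_uniq memes]]].
  by exists [::]; split=> // x; split=> [|[]].
have [Py | nPy] := classic (P y).
- exists (undup (y :: es)); split; first exact: undup_uniq.
  move=> x; rewrite mem_undup !inE; split.
    by case/orP=> [/eqP-> | /memes[xc Px]]; rewrite ?eqxx ?xc ?orbT.
  case=> /orP[/eqP-> | xc] Px; first by rewrite eqxx.
  by apply/orP; right; apply/memes.
- exists es; split=> // x; rewrite memes inE.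
  split=> [[xc Px] | [/orP[/eqP xy | xc] Px] //]; first by rewrite xc orbT.
  by case: nPy; rewrite -xy.
Qed.

Section CommutingIdempotents.
Variables (T : eqType) (R : pzRingType) (F : T -> R).
Hypothesis F_comm : forall x y, F x * F y = F y * F x.
Hypothesis F_idem : forall x, F x * F x = F x.

Local Notation P r := (\prod_(x <- r) F x).

Lemma cprod_comm1 x r : F x * P r = P r * F x.
Proof. by apply: commr_prod => y _; exact: F_comm. Qed.

Lemma cprod_rem x r : x \in r -> P r = F x * P (rem x r).
Proof.
elim: r => [//|y r IH]; rewrite inE /= => /orP[/eqP-> | xr].
  by rewrite eqxx big_cons.
case: eqP => [-> | _]; first by rewrite big_cons.
by rewrite !big_cons (IH xr) !mulrA F_comm.
Qed.

Lemma cprod_undup r : P (undup r) = P r.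
Proof.
elim: r => [//|x r IH] /=; case: ifP => xr; last by rewrite !big_cons IH.
by rewrite IH big_cons (cprod_rem xr) mulrA F_idem.
Qed.

Lemma cprod_perm r1 r2 : perm_eq r1 r2 -> P r1 = P r2.
Proof.
elim: r1 r2 => [|x r1 IH] r2 r12.
  by move: r12; rewrite perm_sym => /perm_nilP ->.
have xr2 : x \in r2 by rewrite -(perm_mem r12) mem_head.
rewrite big_cons (cprod_rem xr2); congr (_ * _); apply: IH.
by rewrite -(perm_cons x) (perm_trans r12) // perm_to_rem.
Qed.

Lemma cprod_eq_mem r1 r2 : r1 =i r2 -> P r1 = P r2.
Proof.
move=> r12; rewrite -cprod_undup -[RHS]cprod_undup; apply: cprod_perm.
by apply: uniq_perm; rewrite ?undup_uniq // => x; rewrite !mem_undup.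
Qed.

End CommutingIdempotents.

Lemma prod_absorb (T : eqType) (R : pzRingType) (F : T -> R) (e : R) (r : seq T) :
  (forall x, x \in r -> e * F x = e) -> e * \prod_(x <- r) F x = e.
Proof.
elim: r => [|x r IH] er; first by rewrite big_nil mulr1.
rewrite big_cons mulrA er ?mem_head // IH // => y yr.
by apply: er; rewrite inE yr orbT.
Qed.

Definition central_idem (S : pzRingType) (u : S) :=
  (forall s, u * s = s * u) /\ u * u = u.

Section EpsilonStronglyGradedRing.
Variables (G : groupType) (S : pzRingType) (A : G -> S -> Prop) (eps : G -> S).
Hypothesis gradA : is_grading A.
Hypothesis epsA : eps_strong A eps.

Local Notation eprod r := (\prod_(g <- r) eps g).

Lemma grade0 g : A g 0.
Proof. by case: gradA => sub _ _ _; case: (sub g). Qed.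

Lemma gradeB g x y : A g x -> A g y -> A g (x - y).
Proof. by case: gradA => sub _ _ _; case: (sub g) => _; apply. Qed.

Lemma gradeD g x y : A g x -> A g y -> A g (x + y).
Proof.
move=> Ax Ay; rewrite -[y]opprK -[- y]sub0r.
by apply: gradeB => //; apply: gradeB => //; exact: grade0.
Qed.

Lemma gradeM g h x y : A g x -> A h y -> A (g * h)%g (x * y).
Proof. by case: gradA => _ mul _ _; apply: mul. Qed.

Lemma grade_sum g (I : Type) (r : seq I) (Q : pred I) (F : I -> S) :
  (forall i, Q i -> A g (F i)) -> A g (\sum_(i <- r | Q i) F i).
Proof. by move=> AF; apply: big_ind => //; [exact: grade0 | exact: gradeD]. Qed.

Lemma grade_prodset g h t : prodset (A g) (A h) t -> A (g * h)%g t.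
Proof.
case=> n [a [b [Aab ->]]]; apply: grade_sum => i _.
by case: (Aab i); apply: gradeM.
Qed.

Lemma homog_ind (P : S -> Prop) :
  P 0 -> (forall x y, P x -> P y -> P (x + y)) ->
  (forall g s, A g s -> P s) -> forall s, P s.
Proof.
move=> P0 PD Phom s; case: gradA => _ _ decomp _.
have [n [gs [xs [_ Axs ->]]]] := decomp s.
by apply: big_ind => // i _; exact: Phom (Axs i).
Qed.

Lemma compA_sum f g n (F : 'I_n -> S) :
  (forall i, Defs.compA A f g (F i)) -> Defs.compA A f g (\sum_(i < n) F i).
Proof.
elim: n F => [|n IH] F FA.
  by exists 0; rewrite big_ord0 mulr0; split=> //; exact: grade0.
rewrite big_ord_recr /=.
have [s1 [As1 ->]] := IH (fun i => F (widen_ord (leqnSn n) i)) (fun i => FA _).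
have [s2 [As2 ->]] := FA ord_max.
by exists (s1 + s2); rewrite mulrDr; split=> //; exact: gradeD.
Qed.

Lemma eps_homog g : A 1%g (eps g).
Proof. by case: (epsA g) => gen _ _; rewrite -(mulgV g); exact: grade_prodset gen. Qed.

Lemma eps_idem g : eps g * eps g = eps g.
Proof. by case: (epsA g) => gen unit _; case: (unit _ gen). Qed.

Lemma eps_mull g s : A g s -> eps g * s = s.
Proof. by case: (epsA g) => _ _ loc /loc[]. Qed.

Lemma eps_mulr g s : A g s -> s * eps (g^-1)%g = s.
Proof. by case: (epsA g) => _ _ loc /loc[]. Qed.

(* eps g commutes with S_e: r eps g and eps g r both lie in the ideal
   S_g S_{g^-1}, of which eps g is a two-sided identity. *)
Lemma eps_comm_deg1 g r : A 1%g r -> eps g * r = r * eps g.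
Proof.
move=> Ar; case: (epsA g) => [[n [a [b [Aab eps_def]]]] unit _].
have left_mul : prodset (A g) (A (g^-1)%g) (r * eps g).
  exists n, (fun i => r * a i), b; split.
    move=> i; case: (Aab i) => Aa Ab; split=> //.
    by rewrite -[g]mul1g; exact: gradeM.
  by rewrite eps_def mulr_sumr; apply: eq_bigr => i _; rewrite mulrA.
have right_mul : prodset (A g) (A (g^-1)%g) (eps g * r).
  exists n, a, (fun i => b i * r); split.
    move=> i; case: (Aab i) => Aa Ab; split=> //.
    by rewrite -[(g^-1)%g]mulg1; exact: gradeM.
  by rewrite eps_def mulr_suml; apply: eq_bigr => i _; rewrite mulrA.
case: (unit _ left_mul) => left_eq _; case: (unit _ right_mul) => _ right_eq.
by rewrite -left_eq -[in LHS]right_eq mulrA.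
Qed.

Lemma eps_comm g h : eps g * eps h = eps h * eps g.
Proof. exact/eps_comm_deg1/eps_homog. Qed.

Lemma eps_shift h g s : A h s -> s * eps g = eps (h * g)%g * s.
Proof.
move=> As.
case: (epsA g) => [[n [a [b [Aab eps_g]]]] _ _].
case: (epsA (h * g)%g) => [[m [c [d [Acd eps_hg]]]] _ _].
have absorb_left : s * eps g = eps (h * g)%g * (s * eps g).
  rewrite eps_g !mulr_sumr; apply: eq_bigr => i _; case: (Aab i) => Aa _.
  by rewrite !mulrA -[eps _ * s * a i]mulrA eps_mull //; exact: gradeM.
have absorb_right : eps (h * g)%g * s = eps (h * g)%g * s * eps g.
  rewrite eps_hg !mulr_suml; apply: eq_bigr => i _; case: (Acd i) => _ Ad.
  have Ads : A (g^-1)%g (d i * s).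
    by rewrite -[(g^-1)%g]mulg1 -(mulVg h) mulgA -invgM; exact: gradeM.
  have := eps_mulr Ads; rewrite invgK => Ads_eps.
  by rewrite -!mulrA [d i * (s * _)]mulrA Ads_eps.
by rewrite absorb_left absorb_right mulrA.
Qed.

Lemma eprod_comm1 g r : eps g * eprod r = eprod r * eps g.
Proof. exact: (@cprod_comm1 _ _ eps eps_comm). Qed.

Lemma eprod_eq_mem r1 r2 : r1 =i r2 -> eprod r1 = eprod r2.
Proof. exact: (@cprod_eq_mem _ _ eps eps_comm eps_idem). Qed.

Lemma eprod_shift h s r :
  A h s -> s * eprod r = eprod [seq (h * g)%g | g <- r] * s.
Proof.
move=> As; elim: r => [|g r IH]; first by rewrite !big_nil mulr1 mul1r.
by rewrite /= !big_cons mulrA (eps_shift _ As) -mulrA IH mulrA.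
Qed.

Lemma eprod_shift_inv h s r :
  A h s -> eprod r * s = s * eprod [seq (h^-1 * g)%g | g <- r].
Proof.
move=> As; rewrite (eprod_shift _ As) -map_comp.
congr (_ * _); congr (\prod_(g <- _) eps g).
by rewrite -[LHS]map_id; apply: eq_map => g /=; rewrite mulVKg.
Qed.

(* The eps g detect nonzero elements: if u eps_g = 0 for all g, then u
   kills every homogeneous s = eps_g s, hence u = u * 1 = 0. *)
Lemma eps_detect (u : S) : u != 0 -> exists g, u * eps g != 0.
Proof.
move=> u0; apply: NNPP => no_g.
have u_eps g : u * eps g = 0.
  by have [// | ug] := eqVneq (u * eps g) 0; case: no_g; exists g.
have u_kill s : u * s = 0.
  elim/homog_ind: s => [|x y ux uy|g s As]; first exact: mulr0.
    by rewrite mulrDr ux uy addr0.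
  by rewrite -(eps_mull As) mulrA u_eps mul0r.
by move: u0; rewrite -[u]mulr1 u_kill eqxx.
Qed.

Section MinimalElements.
Variable u : S.
Hypothesis u_ci : central_idem u.

Lemma ucomm s : u * s = s * u. Proof. by case: u_ci. Qed.
Lemma uidem : u * u = u. Proof. by case: u_ci. Qed.

Lemma uprod_mul r1 r2 : u * eprod r1 * (u * eprod r2) = u * eprod (r1 ++ r2).
Proof. by rewrite big_cat -mulrA [eprod r1 * _]mulrA -ucomm -mulrA mulrA uidem. Qed.

Lemma prod_ueps r : r != [::] -> \prod_(g <- r) (u * eps g) = u * eprod r.
Proof.
elim: r => [//|g r IH] _; rewrite !big_cons.
have [-> | r0] := eqVneq r [::]; first by rewrite !big_nil !mulr1.
by rewrite IH // -mulrA [eps g * _]mulrA -ucomm -mulrA mulrA uidem.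
Qed.

Lemma BsetP x : Bset eps u x <-> exists2 r, r != [::] & x = u * eprod r.
Proof.
split=> [[n [gs ->]] | [r r0 ->]].
  have r0 : [seq gs i | i <- index_enum 'I_n.+1] != [::].
    by apply/eqP => r0; have := map_f gs (mem_index_enum (@ord0 n)); rewrite r0.
  by exists [seq gs i | i <- index_enum 'I_n.+1]; rewrite // -prod_ueps // big_map.
exists (size r).-1, (fun i => nth 1%g r i).
by rewrite -prod_ueps // (big_nth 1%g) big_mkord prednK // lt0n size_eq0.
Qed.

Section OneMinimal.
Variable e : S.
Hypothesis e_min : minB eps u e.

Lemma min_eprod : exists2 r, r != [::] & e = u * eprod r.
Proof. by case: e_min => /BsetP. Qed.

Lemma min_mulu : e * u = e.
Proof. by have [r _ ->] := min_eprod; rewrite -mulrA -ucomm mulrA uidem. Qed.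

Lemma min_umul : u * e = e.
Proof. by have [r _ ->] := min_eprod; rewrite mulrA uidem. Qed.

Lemma min_idem : e * e = e.
Proof.
have [r _ ->] := min_eprod; rewrite uprod_mul; congr (_ * _).
by apply: eprod_eq_mem => g; rewrite mem_cat orbb.
Qed.

Lemma min_comm_eps g : e * eps g = eps g * e.
Proof. by have [r _ ->] := min_eprod; rewrite -mulrA -eprod_comm1 mulrA ucomm -mulrA. Qed.

Lemma min_comm_eprod r : e * eprod r = eprod r * e.
Proof. by apply: commr_prod => g _; exact: min_comm_eps. Qed.

Lemma NsetE g : Nset eps u e g <-> e * eps g = e.
Proof. by rewrite /Nset mulrA min_mulu. Qed.

(* Minimality: e eps_g lies in B and below e, so it is e or 0. *)
Lemma min_dichotomy g : e * eps g = e \/ e * eps g = 0.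
Proof.
have [-> | ege0] := eqVneq (e * eps g) 0; first by right.
left; apply/NsetE; case: e_min => _ _ minimal; apply: minimal.
- have [r r0 e_def] := min_eprod; apply/BsetP; exists (r ++ [:: g]).
    by case: (r) r0.
  by rewrite -uprod_mul big_seq1 -e_def.
- by rewrite mulrA min_mulu.
- by rewrite mulrA min_mulu -mulrA -min_comm_eps mulrA min_idem.
Qed.

End OneMinimal.

(* Two distinct minimal elements are orthogonal: their product lies in B
   below both of them, so it must vanish. *)
Lemma min_orth e f : minB eps u e -> minB eps u f -> e != f -> e * f = 0.
Proof.
move=> e_min f_min ef.
have [r1 r10 e_def] := min_eprod e_min; have [r2 r20 f_def] := min_eprod f_min.
have fe : e * f = f * e.
  rewrite e_def f_def !uprod_mul; congr (_ * _).
  by apply: eprod_eq_mem => g; rewrite !mem_cat orbC.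
have ef_B : Bset eps u (e * f).
  by apply/BsetP; exists (r1 ++ r2); [case: (r1) r10 | rewrite e_def f_def uprod_mul].
have [// | ef0] := eqVneq (e * f) 0.
have [_ _ min_e] := e_min; have [_ _ min_f] := f_min.
have efe : e * f = e by apply: min_e => //; rewrite fe -mulrA (min_idem e_min).
have eff : e * f = f by apply: min_f => //; rewrite -mulrA (min_idem f_min).
by move: ef; rewrite -efe -[X in _ != X]eff eqxx.
Qed.

End MinimalElements.

Section EpsilonCentral.
Variables (u e : S).
Hypothesis u_ci : central_idem u.
Hypothesis e_min : minB eps u e.
Hypothesis N_sub : is_subgroup (Nset eps u e).

Local Notation N := (Nset eps u e).

Lemma N_absorb r : (forall g, g \in r -> N g) -> e * eprod r = e.
Proof. by move=> rN; apply: prod_absorb => g /rN /(NsetE u_ci e_min). Qed.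

Lemma min_eprod_N : exists2 r, e = u * eprod r & forall g, g \in r -> N g.
Proof.
have [r _ e_def] := min_eprod u_ci e_min; exists r => // g gr.
apply/(NsetE u_ci e_min); rewrite e_def -mulrA -eprod_comm1.
by rewrite (cprod_rem eps_comm gr) [eps g * (eps g * _)]mulrA eps_idem.
Qed.

(* For s of degree h in N(e): e s e = e s and e s e = s e. *)
Lemma min_homog_comm_N h s : N h -> A h s -> e * s = s * e.
Proof.
move=> Nh As; have [r e_def rN] := min_eprod_N.
have [_ NM NV] := N_sub.
have right_absorb : e * s * e = e * s.
  rewrite -mulrA {2}e_def [s * _]mulrA -(ucomm u_ci) -[u * s * _]mulrA.
  rewrite (eprod_shift _ As) !mulrA (min_mulu u_ci e_min) N_absorb //.
  move=> g /mapP[x xr ->].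
  exact: NM (rN x xr).
have left_absorb : e * s * e = s * e.
  rewrite {1}e_def -[u * _ * s]mulrA (eprod_shift_inv _ As).
  rewrite [u * (s * _)]mulrA (ucomm u_ci).
  rewrite -!mulrA -(min_comm_eprod u_ci e_min) N_absorb ?(min_umul u_ci e_min) //.
  by move=> g /mapP[x xr ->]; apply: NM (NV _ Nh) (rN x xr).
by rewrite -right_absorb left_absorb.
Qed.

Lemma min_homog_kill h s : ~ N h -> A h s -> e * s = 0 /\ s * e = 0.
Proof.
move=> nNh As; have [_ _ NV] := N_sub.
have kill g : ~ N g -> e * eps g = 0.
  by move=> nNg; case: (min_dichotomy u_ci e_min g) => // /(NsetE u_ci e_min).
have nNh' : ~ N (h^-1)%g by move=> /NV; rewrite invgK.
split; first by rewrite -(eps_mull As) mulrA kill // mul0r.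
by rewrite -(eps_mulr As) -mulrA -(min_comm_eps u_ci e_min) kill // mulr0.
Qed.

Lemma min_central s : e * s = s * e.
Proof.
elim/homog_ind: s => [|x y ex ey|h s As]; first by rewrite mulr0 mul0r.
  by rewrite mulrDr mulrDl ex ey.
have [Nh | nNh] := classic (N h); first exact: min_homog_comm_N As.
by have [-> ->] := min_homog_kill nNh As.
Qed.

(* Strongness: (e S)_{gh} = (e S)_g (e S)_h for g, h in N(e). The inclusion
   from left to right uses e s = e eps_g s with eps_g in S_g S_{g^-1}. *)
Lemma min_strongly_graded : strongly_graded_by A e N.
Proof.
have e_idem := min_idem u_ci e_min.
have e_mul x y : e * x * (e * y) = e * (x * y).
  by rewrite -mulrA [x * _]mulrA -min_central -mulrA mulrA e_idem.
split=> [g s nNg As | g h Ng Nh t]; first by case: (min_homog_kill nNg As).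
split=> [[s [As ->]] | [n [a [b [Aab ->]]]]].
  case: (epsA g) => [[n [a [b [Aab eps_def]]]] _ _].
  exists n, (fun i => e * a i), (fun i => e * (b i * s)); split.
    move=> i; case: (Aab i) => Aa Ab; split; first by exists (a i).
    by exists (b i * s); split=> //; rewrite -[h](mulKg g); exact: gradeM.
  rewrite -{1}((NsetE u_ci e_min _).1 Ng) -mulrA eps_def mulr_suml mulr_sumr.
  by apply: eq_bigr => i _; rewrite e_mul -mulrA.
apply: compA_sum => i; case: (Aab i) => [[x [Ax ->]] [y [Ay ->]]].
by exists (x * y); rewrite e_mul; split=> //; exact: gradeM.
Qed.

End EpsilonCentral.

Section Step.
Variables (u : S) (es : seq S).
Hypothesis u_ci : central_idem u.
Hypothesis es_uniq : uniq es.
Hypothesis es_min : forall e, e \in es <-> minB eps u e.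
Hypothesis es_central : forall e, minB eps u e -> is_subgroup (Nset eps u e).

Local Notation P := (\sum_(e <- es) e).

Lemma min_sum_absorb e : e \in es -> e * P = e.
Proof.
move=> e_es; have e_min := (es_min e).1 e_es.
rewrite mulr_sumr (bigD1_seq e) //= (min_idem u_ci e_min).
rewrite big_seq_cond big1 ?addr0 // => f /andP[f_es fe].
by apply: (min_orth u_ci e_min ((es_min f).1 f_es)); rewrite eq_sym.
Qed.

Lemma min_sum_props :
  [/\ P * P = P, P * u = P, u * P = P & forall s, P * s = s * P].
Proof.
have sum_eq F : (forall e, e \in es -> F e = e) -> \sum_(e <- es) F e = P.
  by move=> FE; rewrite big_seq [RHS]big_seq; apply: eq_bigr => e /FE.
split.
- by rewrite mulr_suml; apply: sum_eq => e; exact: min_sum_absorb.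
- by rewrite mulr_suml; apply: sum_eq => e /es_min; exact: min_mulu.
- by rewrite mulr_sumr; apply: sum_eq => e /es_min; exact: min_umul.
- move=> s; rewrite mulr_suml mulr_sumr !big_seq; apply: eq_bigr => e /es_min e_min.
  exact: (min_central u_ci e_min (es_central e_min)).
Qed.

Lemma step_central_idem : central_idem (u - P).
Proof.
have [PP Pu uP Pc] := min_sum_props; have [uc uu] := u_ci.
split=> [s | ]; first by rewrite mulrBl mulrBr uc Pc.
by rewrite mulrBl !mulrBr uu uP Pu PP subrr subr0.
Qed.

Lemma step_below : (u - P) * u = u - P.
Proof. by have [_ Pu _ _] := min_sum_props; rewrite mulrBl Pu (proj2 u_ci). Qed.

Lemma step_kill e : e \in es -> e * (u - P) = 0.
Proof.
move=> e_es; rewrite mulrBr min_sum_absorb // (min_mulu u_ci ((es_min e).1 e_es)).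
exact: subrr.
Qed.

End Step.

(* With finite support, eps g = 0 outside the finite list l of degrees, so
   B(E^(u)) is covered by the finitely many u * eps(X), X a set of
   positions in l; this gives existence and a finite list of minimal
   elements, and a finite measure that strictly decreases at each step. *)
Section FiniteSupport.
Variable l : seq G.
Hypothesis l_supp : forall g s, A g s -> s != 0 -> g \in l.

Lemma eps_out g : g \notin l -> eps g = 0.
Proof.
move=> gl; case: (epsA g) => [[n [a [b [Aab ->]]]] _ _].
apply: big1 => i _; case: (Aab i) => Aa _.
by have [-> | /(l_supp Aa) gl'] := eqVneq (a i) 0; [rewrite mul0r | rewrite gl' in gl].
Qed.

Lemma eprod_out r : ~~ all (mem l) r -> eprod r = 0.
Proof.
elim: r => [//|g r IH] /=; rewrite negb_and big_cons => /orP[gl | rl].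
  by rewrite eps_out // mul0r.
by rewrite IH // mulr0.
Qed.

Definition sub_seq (X : {set 'I_(size l)}) : seq G :=
  [seq nth 1%g l i | i : 'I_(size l) <- enum X].

Lemma size_sub_seq (X : {set 'I_(size l)}) : size (sub_seq X) = #|X|.
Proof. by rewrite size_map -cardE. Qed.

Lemma mem_sub_seq (X : {set 'I_(size l)}) (i : 'I_(size l)) :
  i \in X -> nth 1%g l i \in sub_seq X.
Proof. by move=> iX; apply: map_f; rewrite mem_enum. Qed.

Lemma sub_seqP r : all (mem l) r ->
  sub_seq [set i : 'I_(size l) | nth 1%g l i \in r] =i r.
Proof.
move=> rl g; apply/mapP/idP => [[i] | gr].
  by rewrite mem_enum inE => ? ->.
have gl : g \in l := allP rl g gr.
have ig : (index g l < size l)%N by rewrite index_mem.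
by exists (Ordinal ig); rewrite ?mem_enum ?inE /= nth_index.
Qed.

Lemma sub_seqU (X Y : {set 'I_(size l)}) :
  sub_seq (X :|: Y) =i sub_seq X ++ sub_seq Y.
Proof.
move=> g; rewrite mem_cat; apply/mapP/orP => [[i] | ].
  by rewrite mem_enum inE => /orP[iX | iY] ->; [left | right]; exact: mem_sub_seq.
case=> /mapP[i]; rewrite mem_enum => iXY ->.
  by exists i; rewrite // mem_enum inE iXY.
by exists i; rewrite // mem_enum inE iXY orbT.
Qed.

Definition measure (u : S) := #|[set X | u * eprod (sub_seq X) != 0]|.

Lemma measure_lt u v X : v * u = v ->
  u * eprod (sub_seq X) != 0 -> v * (u * eprod (sub_seq X)) = 0 ->
  (measure v < measure u)%N.
Proof.
move=> vu uX0 vX0; apply: proper_card; apply/properP; split.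
  apply/subsetP => Y; rewrite !inE; apply: contraNN => /eqP uY0.
  by rewrite -vu -mulrA uY0 mulr0.
by exists X; rewrite inE // negbK -vu -mulrA vX0.
Qed.

Section CentralIdempotent.
Variable u : S.
Hypothesis u_ci : central_idem u.

Lemma Bset_candidate x : Bset eps u x -> x != 0 ->
  exists X, x = u * eprod (sub_seq X).
Proof.
move=> /(BsetP u_ci)[r _ ->] x0.
have rl : all (mem l) r by apply: contraNT x0 => /eprod_out ->; rewrite mulr0.
exists [set i : 'I_(size l) | nth 1%g l i \in r]; congr (_ * _).
by apply/eprod_eq_mem/fsym/sub_seqP.
Qed.

Lemma min_list : exists es, uniq es /\ forall e, e \in es <-> minB eps u e.
Proof.
have [es [es_uniq es_mem]] :=
  uniq_sublist (minB eps u)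
    [seq u * eprod (sub_seq X) | X <- enum {: {set 'I_(size l)}}].
exists es; split=> // e; rewrite es_mem; split=> [[_ //] | e_min]; split=> //.
have [e_B e0 _] := e_min; have [X ->] := Bset_candidate e_B e0.
by apply: map_f; rewrite mem_enum.
Qed.

(* A nonzero u has a minimal element: take X of maximal size with
   u eps(X) != 0; any b = u eps(Y) below it equals u eps(X :|: Y). *)
Lemma exists_min : u != 0 -> exists X, minB eps u (u * eprod (sub_seq X)).
Proof.
move=> u0; have [g ug] := eps_detect u0.
have gl : g \in l by apply: contraNT ug => /eps_out ->; rewrite mulr0.
have ig : (index g l < size l)%N by rewrite index_mem.
pose P X := u * eprod (sub_seq X) != 0.
have PX0 : P [set Ordinal ig] by rewrite /P /sub_seq enum_set1 /= big_seq1 nth_index.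
have [X PX maxX] := arg_maxnP (fun X : {set 'I_(size l)} => #|X|) PX0.
have X0 : (0 < #|X|)%N by rewrite -(cards1 (Ordinal ig)); exact: maxX.
exists X; split=> // [ | b b_B b0 b_le].
  by apply/(BsetP u_ci); exists (sub_seq X); rewrite // -size_eq0 size_sub_seq -lt0n.
have [Y b_def] := Bset_candidate b_B b0.
have bXY : b = u * eprod (sub_seq (X :|: Y)).
  rewrite b_le {1}b_def uprod_mul //; congr (_ * _).
  by apply: eprod_eq_mem => h; rewrite sub_seqU !mem_cat orbC.
have XY : X :|: Y = X.
  apply/eqP; rewrite eq_sym eqEcard subsetUl; apply: maxX.
  by rewrite /P -bXY.
by rewrite bXY XY.
Qed.

End CentralIdempotent.
End FiniteSupport.

Section Process.
Variable l : seq G.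
Hypothesis l_supp : forall g s, A g s -> s != 0 -> g \in l.
Hypothesis eps_central : forall u, reach eps u -> u != 0 ->
  forall e, minB eps u e -> is_subgroup (Nset eps u e).

Lemma reach_central_idem u : reach eps u -> central_idem u.
Proof.
elim=> [|v v' rv vci v0 [es [es_uniq es_min ->]]].
  by split=> [s|]; rewrite ?mul1r ?mulr1.
exact: (step_central_idem vci es_uniq es_min (eps_central rv v0)).
Qed.

Definition decomposes (fs : seq S) (u : S) :=
  [/\ \sum_(f <- fs) f = u, uniq fs,
      forall f g, f \in fs -> g \in fs -> f != g -> f * g = 0,
      forall f, f \in fs -> [/\ central_idem f, f != 0 & f * u = f] &
      forall f, f \in fs -> strong_piece A eps f].

Lemma decomposes_step u es fs : reach eps u -> u != 0 -> uniq es ->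
  (forall e, e \in es <-> minB eps u e) ->
  decomposes fs (u - \sum_(e <- es) e) -> decomposes (es ++ fs) u.
Proof.
move=> ru u0 es_uniq es_min [fs_sum fs_uniq fs_orth fs_ci fs_strong].
have u_ci := reach_central_idem ru; have es_sub := eps_central ru u0.
have e_min e : e \in es -> minB eps u e by move/es_min.
have kill e f : e \in es -> f \in fs -> e * f = 0 /\ f * e = 0.
  move=> e_es f_fs; have [[fc _] _ f_rest] := fs_ci f f_fs.
  have e_f : e * f = 0.
    by rewrite -f_rest fc mulrA (step_kill u_ci es_uniq es_min) // mul0r.
  by split; rewrite // fc.
have es_fs e : e \in es -> e \notin fs.
  move=> e_es; apply/negP => e_fs; have [_ e0 _] := fs_ci e e_fs.
  by move: e0; rewrite -(min_idem u_ci (e_min e e_es)) (kill e e e_es e_fs).1 eqxx.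
split.
- by rewrite big_cat /= fs_sum addrC subrK.
- rewrite cat_uniq es_uniq fs_uniq andbT; apply/hasPn => f /= f_fs.
  by apply/negP => /es_fs; rewrite f_fs.
- move=> f g; rewrite !mem_cat => /orP[f_es | f_fs] /orP[g_es | g_fs] fg.
  + exact: (min_orth u_ci (e_min f f_es) (e_min g g_es) fg).
  + exact: (kill f g f_es g_fs).1.
  + exact: (kill g f g_es f_fs).2.
  + exact: fs_orth.
- move=> f; rewrite mem_cat => /orP[f_es | f_fs].
    have f_min := e_min f f_es; have [_ f0 _] := f_min.
    split=> //; last exact: (min_mulu u_ci f_min).
    split; first exact: (min_central u_ci f_min (es_sub f f_min)).
    exact: (min_idem u_ci f_min).
  have [f_ci f0 f_rest] := fs_ci f f_fs; split=> //.
  by rewrite -f_rest -mulrA (step_below u_ci es_uniq es_min es_sub).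
- move=> f; rewrite mem_cat => /orP[f_es | f_fs]; last exact: fs_strong.
  exists u; split=> //; first exact: e_min.
  exact: (min_strongly_graded u_ci (e_min f f_es) (es_sub f (e_min f f_es))).
Qed.

Lemma process_decomposes u :
  reach eps u -> reach eps 0 /\ exists fs, decomposes fs u.
Proof.
have [n lt_n] := ubnP (measure l u); elim: n u lt_n => [//|n IH] u lt_n ru.
have [u_eq0 | u0] := eqVneq u 0.
  by split; [rewrite -u_eq0 | exists [::]; split; rewrite ?big_nil].
have u_ci := reach_central_idem ru.
have [es [es_uniq es_min]] := min_list l_supp u_ci.
have [X X_min] := exists_min l_supp u_ci u0.
set v := u - \sum_(e <- es) e.
have rv : reach eps v by apply: reach_step ru u0 _; exists es.
have lt_measure : (measure l v < measure l u)%N.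
  have [_ e0 _] := X_min.
  apply: measure_lt (step_below u_ci es_uniq es_min (eps_central ru u0)) e0 _.
  rewrite (proj1 (reach_central_idem rv)) (step_kill u_ci es_uniq es_min) //.
  exact/es_min.
have [r0 [fs fs_dec]] := IH v (leq_trans lt_measure lt_n) rv.
by split=> //; exists (es ++ fs); exact: decomposes_step.
Qed.

End Process.
End EpsilonStronglyGradedRing.

Theorem mainTheorem12 (G : groupType) (S : pzRingType)
  (A : G -> S -> Prop) (eps : G -> S) :
  is_grading A -> eps_strong A eps -> finite_support A ->
  (forall u e, reach eps u -> u != 0 -> minB eps u e ->
     is_subgroup (Nset eps u e)) ->
  reach eps 0 /\
  exists fs : seq S,
    [/\ \sum_(f <- fs) f = 1,
        forall i j, (i < size fs)%N -> (j < size fs)%N -> i != j ->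
          fs`_i * fs`_j = 0,
        forall f, f \in fs -> f * f = f /\ f != 0 /\ (forall s, f * s = s * f) &
        forall f, f \in fs -> strong_piece A eps f \/ trivial_piece A eps f].
Proof.
move=> gradA epsA [l l_supp] eps_central.
have [reach0 [fs [fs_sum fs_uniq fs_orth fs_props fs_strong]]] :=
  process_decomposes gradA epsA l_supp (fun u ru u0 e => eps_central u e ru u0)
    (reach_one eps).
split=> //; exists fs; split=> //.
- by move=> i j i_lt j_lt ij; apply: fs_orth; rewrite ?mem_nth ?nth_uniq.
- by move=> f /fs_props[[f_comm f_idem] f0 _].
- by move=> f /fs_strong; left.
Qed.
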